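(* Let $\mathcal H$ be an infinite-dimensional complex Hilbert space and let $\mathbf A=(A_1,\dots,A_m)$ be an $m$-tuple of bounded self-adjoint operators on $\mathcal H$. For each positive integer $k$, let $S_k(\mathbf A)$ be the set of star centers of $\Lambda_k(\mathbf A)$. Then $$\Lambda_\infty(\mathbf A)=\bigcap_{k\ge1}S_k(\mathbf A)=\bigcap_{k\ge1}\Lambda_k(\mathbf A)=\bigcap\{W(\mathbf A+\mathbf F):\ \mathbf F\in\mathcal S(\mathcal H)^m\cap\mathcal F(\mathcal H)^m\}.$$ Consequently, $\Lambda_\infty(\mathbf A)$ is convex.
   Context: $\mathcal S(\mathcal H)$ is the set of bounded self-adjoint operators on $\mathcal H$ and $\mathcal F(\mathcal H)$ the set of finite-rank operators; for $\mathbf F=(F_1,\dots,F_m)$, $\mathbf A+\mathbf F=(A_1+F_1,\dots,A_m+F_m)$. For a positive integer $k$, $\Lambda_k(\mathbf A)=\{(a_1,\dots,a_m)\in\mathbb R^m:$ there is an orthogonal projection $P$ of rank $k$ on $\mathcal H$ with $PA_jP=a_jP$ for all $j\}$; $\Lambda_\infty(\mathbf A)$ is defined the same way with $P$ of infinite rank. $W(\mathbf B)=\{(\langle B_1x,x\rangle,\dots,\langle B_mx,x\rangle):x\in\mathcal H,\ \|x\|=1\}$ is the joint numerical range. A point $\mathbf c\in S$ is a star center of $S\subseteq\mathbb R^m$ if for every $\mathbf b\in S$ the segment joining $\mathbf c$ and $\mathbf b$ lies in $S$. *)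

From mathcomp Require Import all_boot all_order all_algebra.
From mathcomp Require Import reals.
From mathcomp.real_closed Require Import complex.

Set Implicit Arguments.
Unset Strict Implicit.
Unset Printing Implicit Defensive.

Import Order.TTheory GRing.Theory Num.Theory.
Local Open Scope ring_scope.

Section Hilbert.
Variables (R : realType) (V : lmodType R[i]) (ip : V -> V -> R[i]).

Definition is_inner_product : Prop :=
  [/\ (forall (a : R[i]) (x y z : V), ip (a *: x + y) z = a * ip x z + ip y z),
      (forall x y : V, ip y x = conjc (ip x y))
    & (forall x : V, x != 0 -> 0 < complex.Re (ip x x))].

Definition hnorm (x : V) : R := Num.sqrt (complex.Re (ip x x)).

Definition complete_ip : Prop :=
  forall u : nat -> V,
    (forall e : R, 0 < e -> exists N : nat, forall p q : nat,
        (N <= p)%N -> (N <= q)%N -> hnorm (u p - u q) < e) ->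
    exists l : V, forall e : R, 0 < e -> exists N : nat, forall p : nat,
        (N <= p)%N -> hnorm (u p - l) < e.

Definition hilbert_space : Prop := is_inner_product /\ complete_ip.

Definition subspace_dim (S : V -> Prop) (n : nat) : Prop :=
  exists f : 'I_n -> V,
    [/\ (forall i, S (f i)),
        (forall c : 'I_n -> R[i], \sum_(i < n) c i *: f i = 0 -> forall i, c i = 0)
      & (forall x, S x -> exists c : 'I_n -> R[i], x = \sum_(i < n) c i *: f i)].

Definition finite_dim_sub (S : V -> Prop) : Prop := exists n, subspace_dim S n.

Definition infinite_dimensional : Prop := ~ finite_dim_sub (fun _ => True).

Definition range (T : V -> V) : V -> Prop := fun y => exists x, y = T x.

Definition is_linear_op (T : V -> V) : Prop :=
  forall (a : R[i]) (x y : V), T (a *: x + y) = a *: T x + T y.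

Definition is_bounded_op (T : V -> V) : Prop :=
  is_linear_op T /\ exists c : R, forall x, hnorm (T x) <= c * hnorm x.

Definition bounded_selfadjoint (T : V -> V) : Prop :=
  is_bounded_op T /\ forall x y, ip (T x) y = ip x (T y).

Definition finite_rank (T : V -> V) : Prop := finite_dim_sub (range T).

Definition orth_proj (P : V -> V) : Prop :=
  bounded_selfadjoint P /\ forall x, P (P x) = P x.

Definition proj_rank (P : V -> V) (k : nat) : Prop :=
  orth_proj P /\ subspace_dim (range P) k.

Definition proj_infinite_rank (P : V -> V) : Prop :=
  orth_proj P /\ ~ finite_dim_sub (range P).

Variable m : nat.

Definition compresses (A : 'I_m -> V -> V) (P : V -> V) (a : 'rV[R]_m) : Prop :=
  forall (j : 'I_m) (x : V), P (A j (P x)) = (real_complex R (a ord0 j)) *: P x.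

Definition Lambda_k (A : 'I_m -> V -> V) (k : nat) (a : 'rV[R]_m) : Prop :=
  exists P, proj_rank P k /\ compresses A P a.

Definition Lambda_inf (A : 'I_m -> V -> V) (a : 'rV[R]_m) : Prop :=
  exists P, proj_infinite_rank P /\ compresses A P a.

(* joint numerical range W(B) (the real numbers <B_j x, x> are taken via Re) *)
Definition joint_num_range (B : 'I_m -> V -> V) (a : 'rV[R]_m) : Prop :=
  exists x : V, hnorm x = 1 /\ forall j : 'I_m, a ord0 j = complex.Re (ip (B j x) x).

Definition add_tuple (A F : 'I_m -> V -> V) : 'I_m -> V -> V :=
  fun j x => A j x + F j x.

End Hilbert.

Section Star.
Variables (R : realType) (m : nat).

Definition segment_in (S : 'rV[R]_m -> Prop) (c b : 'rV[R]_m) : Prop :=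
  forall t : R, 0 <= t <= 1 -> S ((1 - t) *: c + t *: b).

Definition star_center (S : 'rV[R]_m -> Prop) (c : 'rV[R]_m) : Prop :=
  S c /\ forall b, S b -> segment_in S c b.

Definition convex_set (S : 'rV[R]_m -> Prop) : Prop :=
  forall c b, S c -> S b -> segment_in S c b.
End Star.

From mathcomp Require Import all_boot all_order all_algebra.
From mathcomp Require Import reals.
From mathcomp.real_closed Require Import complex.
From mathcomp Require boolp classical_sets.
From mathcomp Require Import ring lra.
From Stdlib Require Import Classical.
Set Implicit Arguments.
Unset Strict Implicit.
Unset Printing Implicit Defensive.
Import Order.TTheory GRing.Theory Num.Theory.
Local Open Scope ring_scope.
Local Open Scope complex_scope.
Import ComplexField.Normc.

(* Lambda_inf(A) consists of star centers of every Lambda_k(A): on the range of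
   an infinite-rank compression Q every A_j acts as a_j, so Q contains k
   orthonormal vectors g_i orthogonal to the orthonormal basis f_i of any
   rank-k compression for b and to all the A_j f_i; the vectors
   sqrt (1 - t) g_i + sqrt t f_i then span a rank-k compression for
   (1 - t) a + t b.
   A point of every Lambda_k(A) lies in every W(A + F) with F of finite rank:
   in a compression of rank larger than the total rank of F there is a unit
   vector x orthogonal to all the ranges of F_j, and then F_j x = 0.
   A point a of every W(A + F) lies in Lambda_inf(A): a suitable finite-rank
   perturbation produces, for any finite set T, a unit vector u orthogonal
   to T with <A_j u, u> = a_j; iterating gives an orthonormal sequence e with
   <A_j e_i, e_l> = a_j delta_il, and by completeness the orthogonal projection
   onto its closed span is an infinite-rank compression for a.
   Convexity follows: a segment between two points of Lambda_inf(A) stays in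
   every Lambda_k(A), whose star center one of them is, hence in Lambda_inf(A). *)

Section InnerProduct.
Variables (R : realType) (V : lmodType R[i]) (ip : V -> V -> R[i]).
Hypothesis Hip : is_inner_product ip.

Lemma ipDl x y z : ip (x + y) z = ip x z + ip y z.
Proof. by case: Hip => H _ _; rewrite -{1}(scale1r x) H mul1r. Qed.

Lemma ip0l z : ip 0 z = 0.
Proof. by apply: (addrI (ip 0 z)); rewrite -ipDl !addr0. Qed.

Lemma ipZl a x z : ip (a *: x) z = a * ip x z.
Proof. by case: Hip => H _ _; rewrite -[a *: x]addr0 H ip0l addr0. Qed.

Lemma ipNl x z : ip (- x) z = - ip x z.
Proof. by rewrite -scaleN1r ipZl mulN1r. Qed.

Lemma ipBl x y z : ip (x - y) z = ip x z - ip y z.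
Proof. by rewrite ipDl ipNl. Qed.

Lemma ipC x y : ip y x = conjc (ip x y).
Proof. by case: Hip. Qed.

Lemma ipDr x y z : ip z (x + y) = ip z x + ip z y.
Proof. by rewrite !(ipC _ z) ipDl rmorphD. Qed.

Lemma ipZr a x z : ip z (a *: x) = conjc a * ip z x.
Proof. by rewrite !(ipC _ z) ipZl rmorphM. Qed.

Lemma ip0r z : ip z 0 = 0.
Proof. by rewrite ipC ip0l conjc0. Qed.

Lemma ipNr x z : ip z (- x) = - ip z x.
Proof. by rewrite !(ipC _ z) ipNl rmorphN. Qed.

Lemma ipBr x y z : ip z (x - y) = ip z x - ip z y.
Proof. by rewrite ipDr ipNr. Qed.

Lemma ip_suml (I : Type) (r : seq I) (P : pred I) (F : I -> V) z :
  ip (\sum_(i <- r | P i) F i) z = \sum_(i <- r | P i) ip (F i) z.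
Proof. by apply: (big_morph (ip^~ z)) => [x y|]; rewrite ?ipDl ?ip0l. Qed.

Lemma ip_sumr (I : Type) (r : seq I) (P : pred I) (F : I -> V) z :
  ip z (\sum_(i <- r | P i) F i) = \sum_(i <- r | P i) ip z (F i).
Proof. by apply: (big_morph (ip z)) => [x y|]; rewrite ?ipDr ?ip0r. Qed.

Lemma ipxx_real x : ip x x = (complex.Re (ip x x))%:C.
Proof. by have := ipC x x; case: (ip x x) => a b /= [] Hb; congr (_ +i* _); lra. Qed.

Lemma ipxx_ge0 x : 0 <= complex.Re (ip x x).
Proof.
have [->|nz] := eqVneq x 0; first by rewrite ip0l.
by case: Hip => _ _ /(_ x nz) /ltW.
Qed.

Lemma ipxx_eq0 x : complex.Re (ip x x) = 0 -> x = 0.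
Proof.
move=> H; apply/eqP; apply: contraT => nz.
by case: Hip => _ _ /(_ x nz); rewrite H ltxx.
Qed.

End InnerProduct.

Section ComplexFacts.
Variable R : realType.
Implicit Types (a w : R[i]) (r : R).

Lemma mulc_conj a : a * conjc a = ((normc a) ^+ 2)%:C.
Proof.
case: a => a1 a2 /=; rewrite sqr_sqrtr ?addr_ge0 ?sqr_ge0 //.
by congr (_ +i* _); ring.
Qed.

Lemma normc_ge0 a : 0 <= normc a.
Proof. by case: a => a1 a2 /=; exact: sqrtr_ge0. Qed.

Lemma normc_conj a : normc (conjc a) = normc a.
Proof. by case: a => a1 a2 /=; rewrite sqrrN. Qed.

Lemma normc_real r : normc r%:C = `|r|.
Proof. by rewrite /= expr0n /= addr0 sqrtr_sqr. Qed.

Lemma ReD a w : complex.Re (a + w) = complex.Re a + complex.Re w.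
Proof. by case: a; case: w. Qed.

Lemma Re_sum (I : Type) (s : seq I) (P : pred I) (F : I -> R[i]) :
  complex.Re (\sum_(i <- s | P i) F i) = \sum_(i <- s | P i) complex.Re (F i).
Proof. by apply: big_morph => [x y|]; [exact: ReD|]. Qed.

Lemma Re_realM r w : complex.Re (r%:C * w) = r * complex.Re w.
Proof. by case: w => u v /=; rewrite mul0r subr0. Qed.

Lemma real_of_conj w : w = conjc w -> w = (complex.Re w)%:C.
Proof. by case: w => u v /= [] Hv; congr (_ +i* _); lra. Qed.

Lemma normc_le_mul_eq0 w r : 0 <= r -> (forall d, 0 < d -> normc w <= d * r) -> w = 0.
Proof.
move=> r0 H; apply: eq0_normc; apply/eqP; rewrite eq_le normc_ge0 andbT.
apply/ler_addgt0Pr => e e0; rewrite add0r.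
have d0 : 0 < e / (r + 1) by rewrite divr_gt0 // ltr_wpDl.
apply: le_trans (H _ d0) _.
rewrite mulrAC ler_pdivrMr ?ltr_wpDl //; apply: ler_wpM2l; first exact: ltW.
by rewrite lerDl.
Qed.

End ComplexFacts.

Lemma ler_of_sqr (R : realFieldType) (x y : R) : 0 <= y -> x ^+ 2 <= y ^+ 2 -> x <= y.
Proof.
move=> y0; have [x0|] := lerP 0 x; last by move=> x0 _; exact: le_trans (ltW x0) y0.
by rewrite ler_sqr.
Qed.

Section Norm.
Variables (R : realType) (V : lmodType R[i]) (ip : V -> V -> R[i]).
Hypothesis Hip : is_inner_product ip.
Local Notation hn := (hnorm ip).

Lemma hnorm_ge0 x : 0 <= hn x.
Proof. exact: sqrtr_ge0. Qed.

Lemma hnorm_sqr x : hn x ^+ 2 = complex.Re (ip x x).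
Proof. by rewrite /hnorm sqr_sqrtr // (ipxx_ge0 Hip). Qed.

Lemma hnorm0 : hn 0 = 0.
Proof. by rewrite /hnorm (ip0l Hip) sqrtr0. Qed.

Lemma hnorm_eq0 x : hn x = 0 -> x = 0.
Proof. by move=> H; apply: (ipxx_eq0 Hip); rewrite -hnorm_sqr H expr0n. Qed.

Lemma hnorm1 x : ip x x = 1 -> hn x = 1.
Proof. by move=> h; rewrite /hnorm h /= sqrtr1. Qed.

Lemma ipxx1 x : hn x = 1 -> ip x x = 1.
Proof. by move=> h; rewrite (ipxx_real Hip) -hnorm_sqr h expr1n. Qed.

Lemma hnormZ a x : hn (a *: x) = normc a * hn x.
Proof.
rewrite /hnorm (ipZl Hip) (ipZr Hip) mulrA mulc_conj (ipxx_real Hip x) /=.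
rewrite mulr0 subr0 sqrtrM ?sqr_ge0 // sqrtr_sqr ger0_norm ?normc_ge0 //.
Qed.

Lemma hnormN x : hn (- x) = hn x.
Proof. by rewrite -scaleN1r hnormZ normcN normc1 mul1r. Qed.

Lemma hnormB x y : hn (x - y) = hn (y - x).
Proof. by rewrite -hnormN opprB. Qed.

Lemma Re_ipC x y : complex.Re (ip y x) = complex.Re (ip x y).
Proof. by rewrite (ipC Hip); case: (ip x y). Qed.

Lemma Re_ipDD x y : complex.Re (ip (x + y) (x + y)) =
  complex.Re (ip x x) + 2 * complex.Re (ip x y) + complex.Re (ip y y).
Proof. by rewrite (ipDl Hip) !(ipDr Hip) !ReD (Re_ipC x y); lra. Qed.

(* Minimising [t |-> ||x - t y||^2] at [t = Re <x,y> / ||y||^2]. *)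
Lemma Re_ip_le x y : complex.Re (ip x y) <= hn x * hn y.
Proof.
have [->|ny] := eqVneq y 0; first by rewrite (ip0r Hip) hnorm0 mulr0.
have Y0 : 0 < complex.Re (ip y y) by case: Hip => _ _ /(_ y ny).
set B := complex.Re (ip x y); set Y := complex.Re (ip y y); set t := B / Y.
have Bt : B = t * Y by rewrite /t divfK // gt_eqF.
have H := ipxx_ge0 Hip (x + (- t)%:C *: y).
rewrite Re_ipDD (ipZr Hip) (ipZl Hip) (ipZr Hip) conjc_real !Re_realM -/B -/Y in H.
apply: ler_of_sqr; first by rewrite mulr_ge0 ?hnorm_ge0.
rewrite exprMn !hnorm_sqr -/Y.
have := mulr_ge0 (ltW Y0) H; rewrite Bt; nra.
Qed.

Lemma normc_ip_le x y : normc (ip x y) <= hn x * hn y.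
Proof.
have [E0|nz] := eqVneq (ip x y) 0; first by rewrite E0 normc0 mulr_ge0 ?hnorm_ge0.
set w := ip x y.
have nc : normc w != 0 by apply: contra nz => /eqP/eq0_normc/eqP.
have nC : (normc w)%:C != 0 by apply: contra nc => /eqP [] ->.
pose th := conjc w / (normc w)%:C.
have E : ip (th *: x) y = (normc w)%:C.
  rewrite (ipZl Hip) /th -/w mulrAC [conjc w * w]mulrC mulc_conj expr2 rmorphM.
  by rewrite mulrK // unitfE.
have Nth : normc th = 1.
  rewrite /th normcM normcV normc_conj normc_real ger0_norm ?normc_ge0 //.
  by rewrite divrr // unitfE.
by have := Re_ip_le (th *: x) y; rewrite E hnormZ Nth mul1r.
Qed.

Lemma hnormD x y : hn (x + y) <= hn x + hn y.
Proof.
apply: ler_of_sqr; first by rewrite addr_ge0 ?hnorm_ge0.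
rewrite hnorm_sqr Re_ipDD -!hnorm_sqr sqrrD lerD2r lerD2l mulr2n -mulr2n mulr_natl.
by rewrite ler_pMn2r // Re_ip_le.
Qed.

Lemma hnorm_sum (I : Type) (r : seq I) (P : pred I) (F : I -> V) :
  hn (\sum_(i <- r | P i) F i) <= \sum_(i <- r | P i) hn (F i).
Proof.
apply: (big_ind2 (fun x y => hn x <= y)); rewrite ?hnorm0 //.
by move=> x1 y1 x2 y2 h1 h2; exact: le_trans (hnormD x1 x2) (lerD h1 h2).
Qed.

End Norm.

Section ExtendOrdinalFunction.
Variable T : nmodType.

Definition extn0 n (c : 'I_n -> T) (k : nat) : T := oapp c 0 (insub k).

Lemma extn0E n (c : 'I_n -> T) (j : 'I_n) : extn0 c j = c j.
Proof. by rewrite /extn0 valK. Qed.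

End ExtendOrdinalFunction.

Lemma sum_mul_delta (K : pzRingType) n (F : nat -> K) j : (j < n)%N ->
  \sum_(i < n) F i * ((i : nat) == j)%:R = F j.
Proof.
move=> jn; rewrite (bigD1 (Ordinal jn)) //= eqxx mulr1 big1 ?addr0 // => i ij.
rewrite (_ : (i : nat) == j = false) ?mulr0 //.
by apply: contraNF ij => /eqP ij; apply/eqP/val_inj.
Qed.

Lemma exists_nonzero_mul_eq0 (F : fieldType) (n r : nat) (M : 'M[F]_(n, r)) :
  (r < n)%N -> exists2 v : 'rV_n, v != 0 & v *m M = 0.
Proof.
move=> rn; have : kermx M != 0.
  rewrite kermx_eq0 /row_free; apply/negP => /eqP E.
  by have := rank_leq_col M; rewrite E leqNgt rn.
case/eqP/row_matrixP/not_all_ex_not => i Hi.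
exists (row i (kermx M)); first by apply: contra_not_neq Hi => ->; rewrite row0.
by rewrite -row_mul mulmx_ker row0.
Qed.

Section LinearOperator.
Variables (R : realType) (V : lmodType R[i]) (T : V -> V).
Hypothesis HT : is_linear_op T.

Lemma lin0 : T 0 = 0.
Proof. by have := HT 1 0 0; rewrite scaler0 addr0 scale1r -{1}[T 0]addr0 => /addrI. Qed.

Lemma linD x y : T (x + y) = T x + T y.
Proof. by rewrite -{1}(scale1r x) HT scale1r. Qed.

Lemma linZ a x : T (a *: x) = a *: T x.
Proof. by rewrite -[a *: x]addr0 HT lin0 addr0. Qed.

Lemma linN x : T (- x) = - T x.
Proof. by rewrite -scaleN1r linZ scaleN1r. Qed.

Lemma linB x y : T (x - y) = T x - T y.
Proof. by rewrite linD linN. Qed.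

Lemma lin_sum (I : Type) (r : seq I) (P : pred I) (F : I -> V) :
  T (\sum_(i <- r | P i) F i) = \sum_(i <- r | P i) T (F i).
Proof. by apply: (big_morph T) => [x y|]; rewrite ?linD ?lin0. Qed.

End LinearOperator.

Section FiniteFamilies.
Variables (R : realType) (V : lmodType R[i]).
Local Notation C := R[i].

Definition lin_indep (n : nat) (f : nat -> V) : Prop :=
  forall c : nat -> C, \sum_(i < n) c i *: f i = 0 -> forall i, (i < n)%N -> c i = 0.

Definition in_span (n : nat) (f : nat -> V) (x : V) : Prop :=
  exists c : nat -> C, x = \sum_(i < n) c i *: f i.

Definition subspace (U : V -> Prop) : Prop :=
  U 0 /\ forall (a : C) x y, U x -> U y -> U (a *: x + y).

Definition basis_of (U : V -> Prop) (n : nat) (f : nat -> V) : Prop :=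
  [/\ forall i, (i < n)%N -> U (f i), lin_indep n f & forall x, U x -> in_span n f x].

Lemma subspace_sum (U : V -> Prop) (n : nat) (c : nat -> C) (f : nat -> V) :
  subspace U -> (forall i, (i < n)%N -> U (f i)) -> U (\sum_(i < n) c i *: f i).
Proof.
move=> [U0 UD]; elim: n => [|n IH] Uf; first by rewrite big_ord0.
rewrite big_ord_recr /= addrC; apply: UD; first exact: Uf.
by apply: IH => i ilt; apply: Uf; rewrite ltnS ltnW.
Qed.

Lemma range_subspace (T : V -> V) : is_linear_op T -> subspace (range T).
Proof.
move=> HT; split; first by exists 0; rewrite (lin0 HT).
by move=> a _ _ [x ->] [y ->]; exists (a *: x + y); rewrite HT.
Qed.

Lemma subspace_dimP (U : V -> Prop) n :
  subspace_dim U n <-> exists f, basis_of U n f.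
Proof.
split=> [[g [Ug g_indep g_span]]|[f [Uf f_indep f_span]]].
  exists (extn0 g); split.
  - by move=> i ilt; have -> : i = Ordinal ilt by []; rewrite extn0E.
  - move=> c Hc i ilt; apply: (g_indep (fun j => c j) _ (Ordinal ilt)).
    by rewrite -[RHS]Hc; apply: eq_bigr => j _; rewrite extn0E.
  - move=> x /g_span [c ->]; exists (extn0 c).
    by apply: eq_bigr => j _; rewrite !extn0E.
exists (fun i => f i); split.
- by move=> i; apply: Uf.
- move=> c Hc i; rewrite -(extn0E c); apply: f_indep => //.
  by rewrite -[RHS]Hc; apply: eq_bigr => j _; rewrite extn0E.
- by move=> x /f_span [c ->]; exists (fun j => c j).
Qed.

(* If [N < s], a nonzero left kernel vector of the [s x N] coefficient matrix
   gives a vanishing nontrivial combination of [f]. *)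
Lemma lin_indep_leq_span (s N : nat) (f g : nat -> V) :
  lin_indep s f -> (forall i, (i < s)%N -> in_span N g (f i)) -> (s <= N)%N.
Proof.
move=> f_indep f_span.
have [M HM] : exists M : nat -> nat -> C,
    forall i, (i < s)%N -> f i = \sum_(l < N) M i l *: g l.
  have coef i : exists c : nat -> C, (i < s)%N -> f i = \sum_(l < N) c l *: g l.
    have [/f_span [c ->]|_] := ltnP i s; first by exists c.
    by exists (fun _ => 0).
  by have [M HM] := boolp.choice coef; exists M.
rewrite leqNgt; apply/negP => Ns.
have [v v0 vM] := exists_nonzero_mul_eq0 (\matrix_(i < s, l < N) M i l) Ns.
move/negP: v0; apply; apply/eqP/rowP => i; rewrite mxE.
have := f_indep (extn0 (v ord0)) _ i (ltn_ord i); rewrite extn0E; apply.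
under eq_bigr => j _ do rewrite extn0E HM // scaler_sumr.
rewrite exchange_big /=; apply: big1 => l _.
under eq_bigr do rewrite scalerA.
rewrite -scaler_suml.
have := congr1 (fun w : 'M[C]_(1, N) => w ord0 l) vM; rewrite !mxE => E.
rewrite (_ : \sum_(i < s) _ = 0) ?scale0r //.
by rewrite -[RHS]E; apply: eq_bigr => j _; rewrite mxE.
Qed.

End FiniteFamilies.

Section Dimension.
Variables (R : realType) (V : lmodType R[i]).

Lemma infinite_dim_lin_indep (U : V -> Prop) : subspace U -> ~ finite_dim_sub U ->
  forall s, exists f : nat -> V, (forall i, (i < s)%N -> U (f i)) /\ lin_indep s f.
Proof.
move=> HU NF; elim=> [|s [f [Uf f_indep]]]; first by exists (fun _ => 0); split.
have [x [Ux Nx]] : exists x, U x /\ ~ in_span s f x.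
  apply: NNPP => H; apply: NF; exists s; apply/subspace_dimP; exists f; split=> // x Ux.
  by apply: NNPP => Nx; apply: H; exists x.
pose f' i := if i == s then x else f i.
exists f'; split.
  by move=> i; rewrite ltnS leq_eqVlt /f'; case: eqP => [_ _|_ /= /Uf].
move=> c; rewrite big_ord_recr /= /f' eqxx.
rewrite (eq_bigr (fun i : 'I_s => c i *: f i)) => [E|i _]; last by rewrite /= ifF // ltn_eqF.
have cs : c s = 0.
  apply: NNPP => /eqP cs; apply: Nx; exists (fun i => - (c s)^-1 * c i).
  have Ex : c s *: x = - \sum_(i < s) c i *: f i.
    by apply/eqP; rewrite -addr_eq0 addrC E.
  rewrite -(scalerK cs x) Ex scalerN scaler_sumr -sumrN; apply: eq_bigr => i _.
  by rewrite scalerA mulNr scaleNr.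
rewrite cs scale0r addr0 in E.
by move=> i; rewrite ltnS leq_eqVlt => /orP [/eqP -> //|]; exact: f_indep.
Qed.

Lemma finite_dim_of_span (U : V -> Prop) (N : nat) (g : nat -> V) :
  subspace U -> (forall x, U x -> in_span N g x) -> finite_dim_sub U.
Proof.
move=> HU Ug; apply: NNPP => NF.
have [f [Uf f_indep]] := infinite_dim_lin_indep HU NF N.+1.
by have := lin_indep_leq_span f_indep (fun i ilt => Ug _ (Uf i ilt)); rewrite ltnn.
Qed.

End Dimension.

Section Orthonormal.
Variables (R : realType) (V : lmodType R[i]) (ip : V -> V -> R[i]).
Hypothesis Hip : is_inner_product ip.
Local Notation C := R[i].
Local Notation hn := (hnorm ip).

Definition orthonormal n (e : nat -> V) : Prop :=
  forall i j, (i < n)%N -> (j < n)%N -> ip (e i) (e j) = ((i == j)%:R : C).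

Definition onproj n (e : nat -> V) (x : V) : V := \sum_(i < n) ip x (e i) *: e i.

Lemma orthonormal_ipxx n e i : orthonormal n e -> (i < n)%N -> ip (e i) (e i) = 1.
Proof. by move=> He il; rewrite He // eqxx. Qed.

Lemma ip_comb_orthonormal n e (c : nat -> C) j : orthonormal n e -> (j < n)%N ->
  ip (\sum_(i < n) c i *: e i) (e j) = c j.
Proof.
move=> He jn; rewrite (ip_suml Hip) -(sum_mul_delta c jn); apply: eq_bigr => i _.
by rewrite (ipZl Hip) He.
Qed.

Lemma orthonormal_lin_indep n e : orthonormal n e -> lin_indep n e.
Proof. by move=> He c Hc j jn; rewrite -(ip_comb_orthonormal c He jn) Hc (ip0l Hip). Qed.

Lemma ip_onproj n e x j : orthonormal n e -> (j < n)%N -> ip (onproj n e x) (e j) = ip x (e j).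
Proof. exact: (ip_comb_orthonormal (fun i => ip x (e i))). Qed.

Lemma ip_sub_onproj n e x j : orthonormal n e -> (j < n)%N ->
  ip (x - onproj n e x) (e j) = 0.
Proof. by move=> He jn; rewrite (ipBl Hip) ip_onproj // subrr. Qed.

Lemma onproj_selfadj n e x y : ip (onproj n e x) y = ip x (onproj n e y).
Proof.
rewrite (ip_suml Hip) (ip_sumr Hip); apply: eq_bigr => i _.
by rewrite (ipZl Hip) (ipZr Hip) -(ipC Hip) mulrC.
Qed.

Lemma onproj_lin n e : is_linear_op (onproj n e).
Proof.
move=> a x y; rewrite /onproj scaler_sumr -big_split /=; apply: eq_bigr => i _.
by rewrite (ipDl Hip) (ipZl Hip) scalerDl scalerA.
Qed.

Lemma onproj_idem n e x : orthonormal n e -> onproj n e (onproj n e x) = onproj n e x.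
Proof. by move=> He; rewrite {1}/onproj; apply: eq_bigr => i _; rewrite ip_onproj. Qed.

Lemma onproj_id n e j : orthonormal n e -> (j < n)%N -> onproj n e (e j) = e j.
Proof.
move=> He jn; rewrite /onproj (bigD1 (Ordinal jn)) //= (orthonormal_ipxx He jn) scale1r.
rewrite big1 ?addr0 // => i ij; have ij' : (i : nat) != j.
  by apply: contra ij => /eqP ji; apply/eqP/val_inj.
by rewrite He // eq_sym (negbTE ij') scale0r.
Qed.

Lemma onproj_bounded n e x : orthonormal n e -> hn (onproj n e x) <= n%:R * hn x.
Proof.
move=> He; apply: le_trans (hnorm_sum Hip _ _ _) _.
rewrite (_ : n%:R * hn x = \sum_(i < n) hn x); last by rewrite sumr_const card_ord mulr_natl.
apply: ler_sum => i _.
rewrite hnormZ // (hnorm1 (orthonormal_ipxx He (ltn_ord i))) mulr1.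
by have := normc_ip_le Hip x (e i); rewrite (hnorm1 (orthonormal_ipxx He (ltn_ord i))) mulr1.
Qed.

Lemma onproj_rank n e : orthonormal n e -> proj_rank ip (onproj n e) n.
Proof.
move=> He; split.
  split; last by move=> x; exact: onproj_idem.
  split; last exact: onproj_selfadj.
  by split; [exact: onproj_lin | exists n%:R => x; exact: onproj_bounded].
apply/subspace_dimP; exists e; split.
- by move=> i il; exists (e i); rewrite onproj_id.
- exact: orthonormal_lin_indep.
- by move=> y [x ->]; exists (fun i => ip x (e i)).
Qed.

(* Cut a nonzero combination of [f] out of the kernel of [v |-> (<v, t>)_(t in T)]. *)
Lemma lin_indep_comb_orth n (f : nat -> V) (T : seq V) :
  lin_indep n f -> (size T < n)%N -> exists c : nat -> C,
    \sum_(i < n) c i *: f i != 0 /\ forall t, t \in T -> ip (\sum_(i < n) c i *: f i) t = 0.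
Proof.
move=> f_indep Tn.
have [v v0 vM] := exists_nonzero_mul_eq0 (\matrix_(i < n, l < size T) ip (f i) (nth 0 T l)) Tn.
have [i vi] : exists i : 'I_n, v ord0 i != 0.
  apply: NNPP => H; move/negP: v0; apply; apply/eqP/rowP => i; rewrite !mxE.
  by apply/eqP; apply: contraT => Hn; case: H; exists i.
exists (extn0 (v ord0)); split.
  by apply/negP => /eqP /f_indep /(_ i (ltn_ord i)); rewrite extn0E; apply/eqP.
move=> t tT; rewrite (ip_suml Hip).
have := congr1 (fun w : 'M[C]_(1, size T) => w ord0 (Ordinal (etrans (index_mem t T) tT))) vM.
rewrite !mxE /= => E; rewrite -[RHS]E; apply: eq_bigr => j _.
by rewrite (ipZl Hip) extn0E mxE nth_index.
Qed.

Lemma normalize u : u != 0 -> exists2 r : R, r != 0 & ip (r%:C *: u) (r%:C *: u) = 1.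
Proof.
move=> u0; have hu : hn u != 0 by apply: contra u0 => /eqP /(hnorm_eq0 Hip) ->.
exists (hn u)^-1; first by rewrite invr_eq0.
rewrite (ipZl Hip) (ipZr Hip) conjc_real (ipxx_real Hip) -hnorm_sqr //.
by rewrite -!rmorphM /=; congr (_ +i* _); field.
Qed.

Lemma orthonormal_in_orth (U : V -> Prop) n (f : nat -> V) (T : seq V) k :
  subspace U -> (forall i, (i < n)%N -> U (f i)) -> lin_indep n f -> (size T + k <= n)%N ->
  exists e : nat -> V, [/\ orthonormal k e, (forall i, (i < k)%N -> U (e i)) &
     forall i t, (i < k)%N -> t \in T -> ip (e i) t = 0].
Proof.
move=> HU Uf f_indep; elim: k => [|k IH] Hk; first by exists (fun _ => 0); split.
have Hk' : (size T + k < n)%N by rewrite addnS in Hk.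
have [e [He Ue eT]] := IH (ltnW Hk').
pose T' := T ++ [seq e i | i <- iota 0 k].
have T'n : (size T' < n)%N by rewrite size_cat size_map size_iota.
have [c [c0 cT']] := lin_indep_comb_orth f_indep T'n.
have [r r0 uu] := normalize c0; set u := _ *: _ in uu.
have Uu : U u.
  have Uc := subspace_sum c HU Uf.
  by case: HU => U0 UD; rewrite /u -[_ *: _]addr0; apply: UD.
have uT' t : t \in T' -> ip u t = 0 by move=> tT; rewrite (ipZl Hip) cT' // mulr0.
have eT' l : (l < k)%N -> e l \in T'.
  by move=> lk; rewrite mem_cat map_f ?orbT // mem_iota.
have ltk l : (l < k.+1)%N -> l != k -> (l < k)%N by rewrite ltnS leq_eqVlt => /orP [->|].
exists (fun i => if i == k then u else e i); split.
- move=> i j ik jk; case: (eqVneq i k) => [Ei|ik']; case: (eqVneq j k) => [Ej|jk'].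
  + by rewrite Ei Ej eqxx.
  + by rewrite Ei eq_sym (negbTE jk') uT' // eT' // ltk.
  + by rewrite Ej (negbTE ik') (ipC Hip) uT' ?conjc0 // eT' // ltk.
  + exact: He (ltk _ ik ik') (ltk _ jk jk').
- by move=> i; rewrite ltnS leq_eqVlt; case: eqP => [_ _|_ /= /Ue].
- move=> i t; rewrite ltnS leq_eqVlt; case: eqP => [_ _ tT|_ /= ik tT].
    by apply: uT'; rewrite mem_cat tT.
  exact: eT.
Qed.

End Orthonormal.

Section GramSchmidt.
Variables (R : realType) (V : lmodType R[i]) (ip : V -> V -> R[i]).
Hypothesis Hip : is_inner_product ip.

Lemma gram_schmidt (T : seq V) :
  exists n (e : nat -> V), orthonormal ip n e /\ forall t, t \in T -> onproj ip n e t = t.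
Proof.
elim: T => [|t T [n [e [He eT]]]]; first by exists 0%N, (fun _ => 0).
set r := t - onproj ip n e t.
have [r0|rn0] := eqVneq r 0.
  exists n, e; split => // s; rewrite in_cons => /orP [/eqP ->|/eT //].
  by apply/eqP; rewrite eq_sym -subr_eq0 -/r r0.
have [c _ uu] := normalize Hip rn0; set u := _ *: r in uu.
have er i : (i < n)%N -> ip (e i) r = 0.
  by move=> il; rewrite (ipC Hip) ip_sub_onproj // conjc0.
have ue i : (i < n)%N -> ip u (e i) = 0.
  by move=> il; rewrite (ipC Hip) (ipZr Hip) er // mulr0 conjc0.
have Pu : onproj ip n e u = 0 by apply: big1 => i _; rewrite ue // scale0r.
pose e' i := if i == n then u else e i.
exists n.+1, e'; split.
  have ltn l : (l < n.+1)%N -> l != n -> (l < n)%N by rewrite ltnS leq_eqVlt => /orP [->|].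
  move=> i j il jl; rewrite /e'; case: (eqVneq i n) => [Ei|ni]; case: (eqVneq j n) => [Ej|nj].
  + by rewrite Ei Ej eqxx.
  + by rewrite Ei eq_sym (negbTE nj) ue // ltn.
  + by rewrite Ej (negbTE ni) (ipC Hip) ue ?conjc0 // ltn.
  + exact: He (ltn _ il ni) (ltn _ jl nj).
have onprojS s : onproj ip n.+1 e' s = onproj ip n e s + ip s u *: u.
  rewrite /onproj big_ord_recr /= /e' eqxx; congr (_ + _).
  by apply: eq_bigr => i _; rewrite ltn_eqF.
move=> s; rewrite onprojS in_cons => /orP [/eqP ->|sT]; last first.
  have su : ip s u = 0 by rewrite -(eT _ sT) (onproj_selfadj Hip) Pu (ip0r Hip).
  by rewrite su scale0r addr0 eT.
have Pr : onproj ip n e r = 0.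
  by rewrite /r (linB (onproj_lin Hip n e)) (onproj_idem Hip) // subrr.
have tr : ip t r = ip r r.
  rewrite -{1}(subrK (onproj ip n e t) t) -/r (ipDl Hip) (onproj_selfadj Hip) Pr.
  by rewrite (ip0r Hip) addr0.
rewrite /u (ipZr Hip) tr scalerA (_ : _ * _ = 1) ?scale1r; first by rewrite /r addrC subrK.
by rewrite -uu (ipZl Hip) (ipZr Hip) mulrC.
Qed.

End GramSchmidt.

Section ScalarCompression.
Variables (R : realType) (V : lmodType R[i]) (ip : V -> V -> R[i]).
Hypothesis Hip : is_inner_product ip.
Variables (m : nat) (A : 'I_m -> V -> V).
Hypothesis HAl : forall j, is_linear_op (A j).

Definition scalar_on n (e : nat -> V) (a : 'rV[R]_m) : Prop :=
  forall j i l, (i < n)%N -> (l < n)%N ->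
    ip (A j (e i)) (e l) = (a ord0 j)%:C * (i == l)%:R.

Lemma Lambda_k_of_orthonormal k e a :
  orthonormal ip k e -> scalar_on k e a -> Lambda_k ip A k a.
Proof.
move=> He Ha; exists (onproj ip k e); split; first exact: onproj_rank.
move=> j x; rewrite [X in A j X]/onproj (lin_sum (HAl j)) /onproj scaler_sumr.
apply: eq_bigr => l _; rewrite scalerA; congr (_ *: _).
rewrite (ip_suml Hip) mulrC -(sum_mul_delta (fun i => ip x (e i) * (a ord0 j)%:C) (ltn_ord l)).
by apply: eq_bigr => i _; rewrite (linZ (HAl j)) (ipZl Hip) Ha // mulrA.
Qed.

End ScalarCompression.

Section OperatorClosure.
Variables (R : realType) (V : lmodType R[i]) (ip : V -> V -> R[i]).
Hypothesis Hip : is_inner_product ip.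
Local Notation C := R[i].
Local Notation hn := (hnorm ip).
Implicit Types f g h : V -> V.

Definition norm_bounded f := exists c : R, forall x, hn (f x) <= c * hn x.

Definition selfadj f := forall x y, ip (f x) y = ip x (f y).

Definition spanned_range f := exists N (g : nat -> V), forall x, in_span N g (f x).

Lemma lin_add f g : is_linear_op f -> is_linear_op g -> is_linear_op (fun x => f x + g x).
Proof. by move=> Hf Hg a x y; rewrite Hf Hg scalerDr addrACA. Qed.

Lemma lin_opp f : is_linear_op f -> is_linear_op (fun x => - f x).
Proof. by move=> Hf a x y; rewrite Hf opprD scalerN. Qed.

Lemma lin_comp f g : is_linear_op f -> is_linear_op g -> is_linear_op (fun x => f (g x)).
Proof. by move=> Hf Hg a x y; rewrite Hg Hf. Qed.

Lemma lin_scale f (w : C) : is_linear_op f -> is_linear_op (fun x => w *: f x).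
Proof. by move=> Hf a x y; rewrite Hf scalerDr !scalerA mulrC. Qed.

Lemma norm_bounded_ge0 f : norm_bounded f ->
  exists2 c : R, 0 <= c & forall x, hn (f x) <= c * hn x.
Proof.
case=> c Hc; exists `|c| => // x; apply: le_trans (Hc x) _.
by apply: ler_wpM2r; [exact: hnorm_ge0 | exact: ler_norm].
Qed.

Lemma norm_bounded_add f g : norm_bounded f -> norm_bounded g ->
  norm_bounded (fun x => f x + g x).
Proof.
move=> [c1 H1] [c2 H2]; exists (c1 + c2) => x; rewrite mulrDl.
exact: le_trans (hnormD Hip _ _) (lerD (H1 x) (H2 x)).
Qed.

Lemma norm_bounded_opp f : norm_bounded f -> norm_bounded (fun x => - f x).
Proof. by move=> [c H]; exists c => x; rewrite hnormN. Qed.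

Lemma norm_bounded_comp f g : norm_bounded f -> norm_bounded g ->
  norm_bounded (fun x => f (g x)).
Proof.
move=> /norm_bounded_ge0 [c1 c1_ge0 H1] [c2 H2]; exists (c1 * c2) => x.
by apply: le_trans (H1 _) _; rewrite -mulrA; apply: ler_wpM2l.
Qed.

Lemma norm_bounded_scale f (w : C) : norm_bounded f -> norm_bounded (fun x => w *: f x).
Proof.
move=> /norm_bounded_ge0 [c c_ge0 H]; exists (normc w * c) => x.
by rewrite hnormZ // -mulrA; apply: ler_wpM2l; [exact: normc_ge0 | exact: H].
Qed.

Lemma selfadj_add f g : selfadj f -> selfadj g -> selfadj (fun x => f x + g x).
Proof. by move=> Hf Hg x y; rewrite (ipDl Hip) (ipDr Hip) Hf Hg. Qed.

Lemma selfadj_opp f : selfadj f -> selfadj (fun x => - f x).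
Proof. by move=> Hf x y; rewrite (ipNl Hip) (ipNr Hip) Hf. Qed.

Lemma selfadj_scale f (w : R) : selfadj f -> selfadj (fun x => w%:C *: f x).
Proof. by move=> Hf x y; rewrite (ipZl Hip) (ipZr Hip) conjc_real Hf. Qed.

Lemma selfadj_jordan f g : selfadj f -> selfadj g -> selfadj (fun x => f (g x) + g (f x)).
Proof. by move=> Hf Hg x y; rewrite (ipDl Hip) (ipDr Hip) Hf Hg Hg Hf addrC. Qed.

Lemma selfadj_sandwich f g : selfadj f -> selfadj g -> selfadj (fun x => f (g (f x))).
Proof. by move=> Hf Hg x y; rewrite Hf Hg Hf. Qed.

Lemma spanned_range_add f g : spanned_range f -> spanned_range g ->
  spanned_range (fun x => f x + g x).
Proof.
move=> [N1 [g1 H1]] [N2 [g2 H2]].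
exists (N1 + N2)%N, (fun l => if (l < N1)%N then g1 l else g2 (l - N1)%N) => x.
have [c1 E1] := H1 x; have [c2 E2] := H2 x.
exists (fun l => if (l < N1)%N then c1 l else c2 (l - N1)%N).
rewrite big_split_ord /= E1 E2; congr (_ + _); apply: eq_bigr => i _ /=.
  by rewrite ltn_ord.
by rewrite ltnNge leq_addr /= addKn.
Qed.

Lemma spanned_range_opp f : spanned_range f -> spanned_range (fun x => - f x).
Proof.
move=> [N [g H]]; exists N, g => x; have [c ->] := H x.
by exists (fun l => - c l); rewrite -sumrN; apply: eq_bigr => i _; rewrite scaleNr.
Qed.

Lemma spanned_range_scale f (w : C) : spanned_range f -> spanned_range (fun x => w *: f x).
Proof.
move=> [N [g H]]; exists N, g => x; have [c ->] := H x.
by exists (fun l => w * c l); rewrite scaler_sumr; apply: eq_bigr => i _; rewrite scalerA.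
Qed.

Lemma spanned_range_compr f h : spanned_range f -> spanned_range (fun x => f (h x)).
Proof. by move=> [N [g H]]; exists N, g => x; exact: H. Qed.

Lemma spanned_range_compl f h : is_linear_op h -> spanned_range f ->
  spanned_range (fun x => h (f x)).
Proof.
move=> Hh [N [g H]]; exists N, (fun l => h (g l)) => x; have [c ->] := H x.
by exists c; rewrite (lin_sum Hh); apply: eq_bigr => i _; exact: linZ.
Qed.

Lemma spanned_range_onproj n e : spanned_range (onproj ip n e).
Proof. by exists n, e => x; exists (fun i => ip x (e i)). Qed.

Lemma finite_rank_of_spanned_range f : is_linear_op f -> spanned_range f -> finite_rank f.
Proof.
move=> Hf [N [g H]]; apply: (finite_dim_of_span (N := N) (g := g)).
  exact: range_subspace.
by move=> _ [x ->].
Qed.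

End OperatorClosure.

Section Perturbation.
Variables (R : realType) (V : lmodType R[i]) (ip : V -> V -> R[i]).
Hypothesis Hip : is_inner_product ip.

(* Relative to [P], it kills the off-diagonal blocks of [T] and replaces the
   compression [P T P] by [w P]. *)
Definition compression_perturbation (P T : V -> V) (w : R) (x : V) : V :=
  w%:C *: P x + P (T (P x)) - (P (T x) + T (P x)).

Lemma compression_perturbation_finite_rank n e T w :
  orthonormal ip n e -> bounded_selfadjoint ip T ->
  let F := compression_perturbation (onproj ip n e) T w in
  bounded_selfadjoint ip F /\ finite_rank F.
Proof.
move=> He [[Tl Tb] Ts]; set P := onproj ip n e; move=> F.
have {}Tb : norm_bounded ip T := Tb.
have {}Ts : selfadj ip T := Ts.
have Pl : is_linear_op P := onproj_lin Hip n e.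
have Pb : norm_bounded ip P by exists n%:R => x; exact: onproj_bounded.
have Ps : selfadj ip P by move=> x y; exact: (onproj_selfadj Hip).
have Pr : spanned_range P := spanned_range_onproj ip n e.
have Fl := lin_add (lin_add (lin_scale w%:C Pl) (lin_comp Pl (lin_comp Tl Pl)))
  (lin_opp (lin_add (lin_comp Pl Tl) (lin_comp Tl Pl))).
have Fb := norm_bounded_add Hip (norm_bounded_add Hip (norm_bounded_scale Hip w%:C Pb)
  (norm_bounded_comp Pb (norm_bounded_comp Tb Pb)))
  (norm_bounded_opp Hip (norm_bounded_add Hip (norm_bounded_comp Pb Tb)
  (norm_bounded_comp Tb Pb))).
have Fs := selfadj_add Hip (selfadj_add Hip (selfadj_scale Hip w Ps) (selfadj_sandwich Ps Ts))
  (selfadj_opp Hip (selfadj_jordan Hip Ps Ts)).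
have Fr := spanned_range_add (spanned_range_add (spanned_range_scale w%:C Pr)
  (spanned_range_compr (fun x => T (P x)) Pr))
  (spanned_range_opp (spanned_range_add (spanned_range_compr T Pr)
  (spanned_range_compl Tl Pr))).
split; first by split; first split.
exact: finite_rank_of_spanned_range Fl Fr.
Qed.

Lemma ip_add_compression_perturbation (P T : V -> V) w x :
  is_linear_op P -> selfadj ip P -> (forall v, P (P v) = P v) -> is_linear_op T ->
  ip (T x + compression_perturbation P T w x) x =
  ip (T (x - P x)) (x - P x) + w%:C * ip (P x) (P x).
Proof.
move=> Pl Ps Pi Tl; rewrite /compression_perturbation.
have Px v : ip (P v) x = ip v (P x) by rewrite Ps.
have PPx v : ip (P v) (P x) = ip v (P x) by rewrite Ps Pi.
rewrite !(ipDl Hip) (ipNl Hip) (ipDl Hip) (ipZl Hip) !Px (linB Tl) (ipBl Hip) !(ipBr Hip) PPx.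
ring.
Qed.

End Perturbation.

Section UnitVectors.
Variables (R : realType) (V : lmodType R[i]) (ip : V -> V -> R[i]).
Hypothesis Hip : is_inner_product ip.
Hypothesis Hinf : infinite_dimensional V.

Lemma exists_unit_orth (T : seq V) :
  exists y, ip y y = 1 /\ forall t, t \in T -> ip y t = 0.
Proof.
have HV : subspace (fun _ : V => True) by [].
have [f [_ f_indep]] := infinite_dim_lin_indep HV Hinf (size T).+1.
have [e [He _ eT]] :=
  orthonormal_in_orth Hip (k := 1) HV (fun _ _ => I) f_indep (eq_leq (addn1 _)).
by exists (e 0%N); split => [|t tT]; [exact: orthonormal_ipxx He _ | exact: eT].
Qed.

Variables (m : nat) (A : 'I_m -> V -> V).
Hypothesis HA : forall j, bounded_selfadjoint ip (A j).

Definition in_perturbed_ranges (a : 'rV[R]_m) : Prop :=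
  forall F : 'I_m -> V -> V,
    (forall j, bounded_selfadjoint ip (F j) /\ finite_rank (F j)) ->
    joint_num_range ip (add_tuple A F) a.

(* Perturb [A] so that its compression to a finite-dimensional space [P]
   containing [T], a unit vector [y1] orthogonal to [T] and the [A_j y1] is
   [<A_j y1, y1> P]: the [P]-component of any unit vector [x] of [W(A + F)]
   can then be traded for a multiple of [y1]. *)
Lemma unit_orth_of_perturbed_ranges a (T : seq V) : in_perturbed_ranges a ->
  exists u, [/\ ip u u = 1, forall t, t \in T -> ip u t = 0 &
            forall j, complex.Re (ip (A j u) u) = a ord0 j].
Proof.
move=> Ha; have [y1 [y1y1 y1T]] := exists_unit_orth T.
pose T1 := T ++ y1 :: [seq A j y1 | j <- enum 'I_m].
have [n [e [He eT1]]] := gram_schmidt Hip T1.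
pose P := onproj ip n e; pose w j := complex.Re (ip (A j y1) y1).
have [x [x1 Hx]] := Ha _ (fun j => compression_perturbation_finite_rank Hip (w j) He (HA j)).
have Pl : is_linear_op P := onproj_lin Hip n e.
have Ps : selfadj ip P by move=> ? ?; exact: (onproj_selfadj Hip).
have Pi v : P (P v) = P v by exact: onproj_idem.
have [y [z [xyz Py Pz]]] : exists y z, [/\ x = y + z, P y = 0 & P x = z].
  by exists (x - P x), (P x); rewrite subrK (linB Pl) Pi subrr.
have yT1 t : t \in T1 -> ip y t = 0 by move=> tT; rewrite -(eT1 t tT) -Ps Py (ip0l Hip).
have zy : ip z y = 0 by rewrite -Pz Ps Py (ip0r Hip).
have yy1 : ip y y1 = 0 by rewrite yT1 // mem_cat in_cons eqxx orbT.
have Ay1T1 j : A j y1 \in T1 by rewrite mem_cat in_cons map_f ?orbT ?mem_enum.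
pose s := hnorm ip z; pose u := y + s%:C *: y1.
have zz : ip z z = (s * s)%:C by rewrite (ipxx_real Hip) -(hnorm_sqr Hip) expr2.
exists u; split.
- have := ipxx1 Hip x1; rewrite xyz !(ipDl Hip) !(ipDr Hip) (ipC Hip z y) zy conjc0 zz.
  rewrite !(ipZl Hip) !(ipZr Hip) yy1 (ipC Hip y y1) yy1 y1y1 conjc0 conjc_real rmorphM.
  by move=> E; rewrite -[RHS]E; ring.
- move=> t tT; rewrite /u (ipDl Hip) (ipZl Hip) y1T // yT1 ?mulr0 ?addr0 //.
  by rewrite mem_cat tT.
- move=> j; have [[Al _] As] := HA j.
  rewrite [RHS](Hx j) /add_tuple (ip_add_compression_perturbation Hip) // -/P Pz.
  rewrite {1 2}xyz addrK.
  have Ayy1 : ip (A j y) y1 = 0 by rewrite As yT1.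
  have Ay1y : ip (A j y1) y = 0 by rewrite As (ipC Hip) Ayy1 conjc0.
  rewrite /u (linD Al) (linZ Al) !(ipDl Hip) !(ipDr Hip) !(ipZl Hip) !(ipZr Hip).
  rewrite Ayy1 Ay1y conjc_real !mulr0 !addr0 add0r zz !ReD mulrA -rmorphM !Re_realM /w.
  by rewrite mulrC.
Qed.

End UnitVectors.

Lemma nondecreasing_bounded_cauchy (R : realType) (u : nat -> R) (B : R) :
  (forall n, u n <= u n.+1) -> (forall n, u n <= B) ->
  forall e, 0 < e -> exists N, forall p q, (N <= q <= p)%N -> u p - u q < e.
Proof.
move=> u_incr u_le e e0.
have u_mono : {homo u : p q / (p <= q)%N >-> p <= q}.
  by apply: homo_leq => //; exact: le_trans.
pose E := fun r : R => exists n, r = u n.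
have supE : classical_sets.has_sup E by split; [exists (u 0%N); exists 0%N | exists B => _ [n ->]].
have [_ [N ->] uN] := sup_adherent e0 supE.
exists N => p q /andP [Nq qp].
have up : u p <= sup E by apply: sup_upper_bound => //; exists p.
by have := u_mono _ _ Nq; lra.
Qed.

Section Limits.
Variables (R : realType) (V : lmodType R[i]) (ip : V -> V -> R[i]).
Hypothesis Hip : is_inner_product ip.
Local Notation C := R[i].
Local Notation hn := (hnorm ip).

Definition converges_to (u : nat -> V) (l : V) : Prop :=
  forall e : R, 0 < e -> exists N, forall p, (N <= p)%N -> hn (u p - l) < e.

Lemma converges_to_unique u l1 l2 : converges_to u l1 -> converges_to u l2 -> l1 = l2.
Proof.
move=> H1 H2; apply/eqP; rewrite -subr_eq0; apply/eqP/(hnorm_eq0 Hip)/eqP.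
rewrite eq_le hnorm_ge0 andbT; apply/ler_addgt0Pr => e e0; rewrite add0r.
have e2 : 0 < e / 2 by rewrite divr_gt0.
have [N1 h1] := H1 _ e2; have [N2 h2] := H2 _ e2; pose p := maxn N1 N2.
have a1 := h1 p (leq_maxl _ _); have a2 := h2 p (leq_maxr _ _).
rewrite (hnormB Hip) in a1; have := hnormD Hip (l1 - u p) (u p - l2).
by rewrite addrA subrK => ?; lra.
Qed.

Lemma converges_to_add u v l l' : converges_to u l -> converges_to v l' ->
  converges_to (fun p => u p + v p) (l + l').
Proof.
move=> H1 H2 e e0; have e2 : 0 < e / 2 by rewrite divr_gt0.
have [N1 h1] := H1 _ e2; have [N2 h2] := H2 _ e2.
exists (maxn N1 N2) => p; rewrite geq_max => /andP [/h1 a1 /h2 a2].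
by rewrite opprD addrACA; have := hnormD Hip (u p - l) (v p - l'); lra.
Qed.

Lemma converges_toZ u l (a : C) : converges_to u l -> converges_to (fun p => a *: u p) (a *: l).
Proof.
move=> H e e0; have a_ge0 := normc_ge0 a; have a1 : 0 < normc a + 1 by rewrite ltr_wpDl.
have [N h] := H _ (divr_gt0 e0 a1); exists N => p /h hp; rewrite -scalerBr (hnormZ Hip).
have := hnorm_ge0 ip (u p - l); rewrite -[e](divfK (lt0r_neq0 a1)).
by set d := e / _ in hp *; nra.
Qed.

Lemma converges_to_eventually u l N : (forall p, (N <= p)%N -> u p = l) -> converges_to u l.
Proof. by move=> H e e0; exists N => p Np; rewrite H // subrr (hnorm0 Hip). Qed.

Lemma converges_to_ext u v l : (forall p, u p = v p) -> converges_to u l -> converges_to v l.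
Proof. by move=> E H e e0; have [N h] := H e e0; exists N => p Np; rewrite -E; apply: h. Qed.

Lemma ip_limit_eventually u l y w N : converges_to u l ->
  (forall p, (N <= p)%N -> ip (u p) y = w) -> ip l y = w.
Proof.
move=> H Hw; apply/eqP; rewrite -subr_eq0; apply/eqP.
apply: (normc_le_mul_eq0 (hnorm_ge0 ip y)) => d d0; have [N' h] := H d d0.
pose p := maxn N N'.
rewrite -(Hw p (leq_maxl _ _)) -(ipBl Hip) -normcN -(ipNl Hip) opprB.
apply: le_trans (normc_ip_le Hip _ _) _; apply: ler_wpM2r; first exact: hnorm_ge0.
exact: ltW (h p (leq_maxr _ _)).
Qed.

End Limits.

Section OrthonormalSequence.
Variables (R : realType) (V : lmodType R[i]) (ip : V -> V -> R[i]).
Hypothesis Hip : is_inner_product ip.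
Local Notation C := R[i].
Local Notation hn := (hnorm ip).
Variable e : nat -> V.
Hypothesis He : forall i j, ip (e i) (e j) = ((i == j)%:R : C).

Lemma orthonormal_seq n : orthonormal ip n e.
Proof. by move=> i j _ _; exact: He. Qed.

Local Notation S n := (onproj ip n e).

Lemma ip_comb_seq (r : seq nat) (d : nat -> C) l : uniq r -> l \in r ->
  ip (\sum_(i <- r) d i *: e i) (e l) = d l.
Proof.
move=> ur lr; rewrite (ip_suml Hip) (big_rem l) //= (ipZl Hip) He eqxx mulr1.
rewrite big_seq big1 ?addr0 // => i; rewrite mem_rem_uniq // => /andP [il _].
by rewrite (ipZl Hip) He (negbTE il) mulr0.
Qed.

Lemma hnorm_comb_seq_sqr (r : seq nat) (d : nat -> C) : uniq r ->
  hn (\sum_(i <- r) d i *: e i) ^+ 2 = \sum_(i <- r) normc (d i) ^+ 2.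
Proof.
move=> ur; rewrite (hnorm_sqr Hip) (ip_sumr Hip) Re_sum big_seq [RHS]big_seq.
by apply: eq_bigr => i ir; rewrite (ipZr Hip) ip_comb_seq // mulrC mulc_conj.
Qed.

Lemma onproj_natE n x : S n x = \sum_(0 <= i < n) ip x (e i) *: e i.
Proof. by rewrite big_mkord. Qed.

Lemma hnorm_onproj_subr_sqr p q x : (q <= p)%N ->
  hn (S p x - S q x) ^+ 2 = hn (S p x) ^+ 2 - hn (S q x) ^+ 2.
Proof.
move=> qp; have -> : S p x - S q x = \sum_(q <= i < p) ip x (e i) *: e i.
  by rewrite !onproj_natE (big_cat_nat (leq0n q) qp) addrC addKr.
rewrite !onproj_natE !hnorm_comb_seq_sqr ?index_iota ?iota_uniq //.
by rewrite (big_cat_nat (leq0n q) qp) addrC addKr.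
Qed.

Lemma bessel n x : hn (S n x) ^+ 2 <= complex.Re (ip x x).
Proof.
have o : ip (x - S n x) (S n x) = 0.
  rewrite {2}/onproj (ip_sumr Hip) big1 // => i _.
  by rewrite (ipZr Hip) (ip_sub_onproj Hip x (@orthonormal_seq n) (ltn_ord i)) mulr0.
have := Re_ipDD Hip (x - S n x) (S n x); rewrite subrK o /= mulr0 addr0 => ->.
by rewrite (hnorm_sqr Hip) lerDr (ipxx_ge0 Hip).
Qed.

Lemma hnorm_onproj_le n x : hn (S n x) <= hn x.
Proof. by apply: ler_of_sqr; rewrite ?hnorm_ge0 // (hnorm_sqr Hip x) bessel. Qed.

Lemma onproj_cauchy x e0 : 0 < e0 ->
  exists N, forall p q, (N <= p)%N -> (N <= q)%N -> hn (S p x - S q x) < e0.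
Proof.
move=> e00; have sqr_incr n : hn (S n x) ^+ 2 <= hn (S n.+1 x) ^+ 2.
  by rewrite -subr_ge0 -hnorm_onproj_subr_sqr // sqr_ge0.
have [N HN] := nondecreasing_bounded_cauchy sqr_incr (bessel ^~ x) (mulr_gt0 e00 e00).
have lt_e0 p q : (N <= q <= p)%N -> hn (S p x - S q x) < e0.
  move=> /andP [Nq qp]; have := HN _ _ (introT andP (conj Nq qp)).
  rewrite -hnorm_onproj_subr_sqr // => lt_sqr.
  by rewrite -(ltr_pXn2r (n := 2)) ?nnegrE ?hnorm_ge0 ?ltW // expr2.
exists N => p q Np Nq; case: (leqP q p) => [qp|pq]; first by rewrite lt_e0 ?Nq.
by rewrite (hnormB Hip) lt_e0 // Np ltnW.
Qed.

End OrthonormalSequence.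

Arguments orthonormal_seq {R V ip e} He n.

Section LimitProjection.
Variables (R : realType) (V : lmodType R[i]) (ip : V -> V -> R[i]).
Hypothesis Hip : is_inner_product ip.
Hypothesis Hc : complete_ip ip.
Local Notation C := R[i].
Local Notation hn := (hnorm ip).
Variable e : nat -> V.
Hypothesis He : forall i j, ip (e i) (e j) = ((i == j)%:R : C).
Local Notation S n := (onproj ip n e).

Lemma onproj_converges x : exists l, converges_to ip (fun n => S n x) l.
Proof. exact: Hc (onproj_cauchy Hip He x). Qed.

(* The orthogonal projection onto the closed span of [e]. *)
Definition limproj x : V := proj1_sig (boolp.cid (onproj_converges x)).

Lemma limprojP x : converges_to ip (fun n => S n x) (limproj x).
Proof. exact: proj2_sig (boolp.cid (onproj_converges x)). Qed.

Lemma ip_limproj x n : ip (limproj x) (e n) = ip x (e n).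
Proof.
apply: (ip_limit_eventually Hip (limprojP x) (N := n.+1)) => p np.
exact: (ip_onproj Hip x (orthonormal_seq He p) np).
Qed.

Lemma onproj_limproj n x : S n (limproj x) = S n x.
Proof. by apply: eq_bigr => i _; rewrite ip_limproj. Qed.

Lemma limproj_lin : is_linear_op limproj.
Proof.
move=> c x y; apply: (converges_to_unique Hip (limprojP (c *: x + y))).
apply: (converges_to_ext (u := fun p => c *: S p x + S p y)).
  by move=> p; rewrite (onproj_lin Hip).
exact: (converges_to_add Hip (converges_toZ Hip c (limprojP x)) (limprojP y)).
Qed.

Lemma hnorm_limproj_le x : hn (limproj x) <= 1 * hn x.
Proof.
rewrite mul1r; apply/ler_addgt0Pr => d d0.
have [N h] := limprojP x d0; have := h N (leqnn _); rewrite (hnormB Hip) => hN.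
have := hnormD Hip (limproj x - S N x) (S N x); rewrite subrK.
by have := hnorm_onproj_le Hip He N x; lra.
Qed.

Lemma limproj_selfadj x y : ip (limproj x) y = ip x (limproj y).
Proof.
apply/eqP; rewrite -subr_eq0; apply/eqP.
apply: (normc_le_mul_eq0 (r := hn y + hn x)); first by rewrite addr_ge0 ?hnorm_ge0.
move=> d d0; have [N1 h1] := limprojP x d0; have [N2 h2] := limprojP y d0.
pose p := maxn N1 N2.
have a1 := h1 p (leq_maxl _ _); have a2 := h2 p (leq_maxr _ _).
rewrite (hnormB Hip) in a1; rewrite (hnormB Hip) in a2.
have -> : ip (limproj x) y - ip x (limproj y) =
    ip (limproj x - S p x) y - ip x (limproj y - S p y).
  by rewrite (ipBl Hip) (ipBr Hip) (onproj_selfadj Hip); ring.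
apply: le_trans (le_normcD _ _) _; rewrite normcN.
have c1 := normc_ip_le Hip (limproj x - S p x) y.
have c2 := normc_ip_le Hip x (limproj y - S p y).
have b1 : hn (limproj x - S p x) * hn y <= d * hn y.
  by apply: ler_wpM2r; [exact: hnorm_ge0 | exact: ltW].
have b2 : hn x * hn (limproj y - S p y) <= hn x * d.
  by apply: ler_wpM2l; [exact: hnorm_ge0 | exact: ltW].
lra.
Qed.

Lemma limproj_idem x : limproj (limproj x) = limproj x.
Proof.
apply: (converges_to_unique Hip (limprojP (limproj x))).
by apply: converges_to_ext (limprojP x) => p; rewrite onproj_limproj.
Qed.

Lemma limproj_id n : limproj (e n) = e n.
Proof.
apply: (converges_to_unique Hip (limprojP (e n))).
apply: (converges_to_eventually Hip (N := n.+1)) => p np.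
exact: onproj_id (orthonormal_seq He p) np.
Qed.

Lemma limproj_infinite_rank : ~ finite_dim_sub (range limproj).
Proof.
case=> r /subspace_dimP [f [_ _ f_span]].
have := lin_indep_leq_span (orthonormal_lin_indep Hip (orthonormal_seq He r.+1))
  (fun i _ => f_span _ (ex_intro _ (e i) (esym (limproj_id i)))).
by rewrite ltnn.
Qed.

Variables (m : nat) (A : 'I_m -> V -> V).
Hypothesis HA : forall j, bounded_selfadjoint ip (A j).
Variable a : 'rV[R]_m.
Hypothesis Ha : forall n, scalar_on ip A n e a.

Lemma ip_A_limproj x j n : ip (A j (limproj x)) (e n) = (a ord0 j)%:C * ip x (e n).
Proof.
have [[Al _] As] := HA j; rewrite As.
apply: (ip_limit_eventually Hip (limprojP x) (N := n.+1)) => p np.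
rewrite /onproj (ip_suml Hip) mulrC -(sum_mul_delta (fun i => ip x (e i) * _) np).
by apply: eq_bigr => i _; rewrite (ipZl Hip) -As (Ha j (ltn_ord i) np) mulrA.
Qed.

Lemma limproj_compresses : compresses A limproj a.
Proof.
move=> j x; apply: (converges_to_unique Hip (limprojP (A j (limproj x)))).
apply: (converges_to_ext (u := fun p => (a ord0 j)%:C *: S p x)).
  move=> p; rewrite /onproj scaler_sumr; apply: eq_bigr => i _.
  by rewrite ip_A_limproj scalerA.
exact: (converges_toZ Hip _ (limprojP x)).
Qed.

Lemma Lambda_inf_of_orthonormal_seq : Lambda_inf ip A a.
Proof.
exists limproj; split; last exact: limproj_compresses.
split; last exact: limproj_infinite_rank.
split; last exact: limproj_idem.
split; last exact: limproj_selfadj.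
by split; [exact: limproj_lin | exists 1 => x; exact: hnorm_limproj_le].
Qed.

End LimitProjection.

Section StrongRecursion.
Variables (T : Type) (g : seq T -> T).

Fixpoint strong_rec_seq n : seq T :=
  if n is n'.+1 then rcons (strong_rec_seq n') (g (strong_rec_seq n')) else [::].

Lemma mem_strong_rec_seq (T' : eqType) (f : T -> T') l n : (l < n)%N ->
  f (g (strong_rec_seq l)) \in map f (strong_rec_seq n).
Proof.
elim: n => // n IH; rewrite ltnS leq_eqVlt /= map_rcons mem_rcons in_cons.
by case/orP => [/eqP -> | /IH ->]; rewrite ?eqxx ?orbT.
Qed.

End StrongRecursion.

Section PerturbedRangesToLambdaInf.
Variables (R : realType) (V : lmodType R[i]) (ip : V -> V -> R[i]).
Hypotheses (Hip : is_inner_product ip) (Hc : complete_ip ip).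
Hypothesis Hinf : infinite_dimensional V.
Variables (m : nat) (A : 'I_m -> V -> V).
Hypothesis HA : forall j, bounded_selfadjoint ip (A j).

(* Choose unit vectors [e_i] one at a time, each orthogonal to all earlier
   [e_l] and [A_j e_l]. *)
Lemma Lambda_inf_of_perturbed_ranges a : in_perturbed_ranges ip A a -> Lambda_inf ip A a.
Proof.
move=> Ha.
have [pick pickP] := boolp.choice (fun T => unit_orth_of_perturbed_ranges Hip Hinf HA T Ha).
pose closure (s : seq V) := s ++ flatten [seq [seq A j x | j <- enum 'I_m] | x <- s].
pose g s := pick (closure s); pose e i := g (strong_rec_seq g i).
have e_closure l i : (l < i)%N -> (e l \in closure (strong_rec_seq g i)) &&
    all (fun j => A j (e l) \in closure (strong_rec_seq g i)) (enum 'I_m).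
  move=> li; have := mem_strong_rec_seq g id li; rewrite map_id => el.
  rewrite mem_cat el /=; apply/allP => j _; rewrite mem_cat; apply/orP; right.
  apply/flattenP; exists [seq A j' (e l) | j' <- enum 'I_m]; first exact: map_f el.
  by rewrite map_f ?mem_enum.
have ee i : ip (e i) (e i) = 1 by case: (pickP (closure (strong_rec_seq g i))).
have e_orth l i : (l < i)%N -> ip (e i) (e l) = 0.
  move=> /e_closure /andP [el _]; case: (pickP (closure (strong_rec_seq g i))) => _ + _.
  exact.
have eA_orth l i j : (l < i)%N -> ip (e i) (A j (e l)) = 0.
  move=> /e_closure /andP [_ /allP /(_ j (mem_enum _ j))].
  by case: (pickP (closure (strong_rec_seq g i))) => _ + _; apply.
have eAe i j : ip (A j (e i)) (e i) = (a ord0 j)%:C.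
  have [_ As] := HA j.
  rewrite (real_of_conj (w := ip (A j (e i)) (e i))); last by rewrite -(ipC Hip) As.
  by case: (pickP (closure (strong_rec_seq g i))) => _ _ /(_ j) E; congr (_%:C); exact: E.
apply: (Lambda_inf_of_orthonormal_seq Hip Hc (e := e) _ HA) => [i l | n j i l _ _].
  case: (ltngtP i l) => [il|li|->]; rewrite ?ee //.
    by rewrite (ipC Hip) e_orth // conjc0.
  by rewrite e_orth.
have [_ As] := HA j; case: (ltngtP i l) => [il|li|->]; rewrite ?eAe ?mulr1 //.
  by rewrite (ipC Hip) eA_orth // conjc0 mulr0.
by rewrite As eA_orth // mulr0.
Qed.

End PerturbedRangesToLambdaInf.

Section Compressions.
Variables (R : realType) (V : lmodType R[i]) (ip : V -> V -> R[i]).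
Hypothesis Hip : is_inner_product ip.
Local Notation C := R[i].
Variables (m : nat) (A : 'I_m -> V -> V).
Hypothesis HA : forall j, bounded_selfadjoint ip (A j).

Lemma ip_compresses P a j u v : orth_proj ip P -> compresses A P a ->
  range P u -> range P v -> ip (A j u) v = (a ord0 j)%:C * ip u v.
Proof.
move=> [[_ Ps] Pi] PA [u' ->] [v' ->].
by rewrite -Ps PA (ipZl Hip) -Ps Pi.
Qed.

Lemma orthonormal_of_Lambda_k n b (T : seq V) k : Lambda_k ip A n b -> (size T + k <= n)%N ->
  exists f, [/\ orthonormal ip k f, scalar_on ip A k f b &
                forall i t, (i < k)%N -> t \in T -> ip (f i) t = 0].
Proof.
move=> [P [[HP /subspace_dimP [f0 [Uf0 f0_indep _]]] PA]] Tkn.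
have [[[Pl _] _] _] := HP.
have [f [Hf Uf fT]] := orthonormal_in_orth Hip (range_subspace Pl) Uf0 f0_indep Tkn.
exists f; split => // j i l ik lk.
by rewrite (ip_compresses j HP PA (Uf i ik) (Uf l lk)) Hf.
Qed.

Lemma orthonormal_of_Lambda_inf a : Lambda_inf ip A a -> forall (T : seq V) k,
  exists g, [/\ orthonormal ip k g, scalar_on ip A k g a &
                forall i t, (i < k)%N -> t \in T -> ip (g i) t = 0].
Proof.
move=> [Q [[HQ Qinf] QA]] T k; have [[[Ql _] _] _] := HQ.
have [f [Uf f_indep]] := infinite_dim_lin_indep (range_subspace Ql) Qinf (size T + k).
have [g [Hg Ug gT]] := orthonormal_in_orth Hip (range_subspace Ql) Uf f_indep (leqnn _).
exists g; split => // j i l ik lk.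
by rewrite (ip_compresses j HQ QA (Ug i ik) (Ug l lk)) Hg.
Qed.

(* With [g] orthogonal to [f] and to every [A_j f], [sqrt (1 - t) g + sqrt t f]
   mixes the two compressions without cross terms. *)
Lemma scalar_on_mix k f g (a b : 'rV[R]_m) (t : R) : 0 <= t <= 1 ->
  orthonormal ip k f -> scalar_on ip A k f b ->
  orthonormal ip k g -> scalar_on ip A k g a ->
  (forall i l, (i < k)%N -> (l < k)%N -> ip (g i) (f l) = 0) ->
  (forall j i l, (i < k)%N -> (l < k)%N -> ip (g i) (A j (f l)) = 0) ->
  let h i := (Num.sqrt (1 - t))%:C *: g i + (Num.sqrt t)%:C *: f i in
  orthonormal ip k h /\ scalar_on ip A k h ((1 - t) *: a + t *: b).
Proof.
move=> /andP [t0 t1] Hf Hfb Hg Hga gf gAf h; rewrite {}/h.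
set al := Num.sqrt (1 - t); set be := Num.sqrt t.
have al2 : al * al = 1 - t by rewrite -expr2 sqr_sqrtr // subr_ge0.
have be2 : be * be = t by rewrite -expr2 sqr_sqrtr.
have fg i l : (i < k)%N -> (l < k)%N -> ip (f i) (g l) = 0.
  by move=> ik lk; rewrite (ipC Hip) gf // conjc0.
have Agf j i l : (i < k)%N -> (l < k)%N -> ip (A j (g i)) (f l) = 0.
  by move=> ik lk; have [_ ->] := HA j; rewrite gAf.
have Afg j i l : (i < k)%N -> (l < k)%N -> ip (A j (f i)) (g l) = 0.
  by move=> ik lk; rewrite (ipC Hip) gAf // conjc0.
have albe : al%:C * al%:C + be%:C * be%:C = 1 :> C.
  by rewrite -!rmorphM al2 be2 -rmorphD subrK.
split=> [i l ik lk | j i l ik lk].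
  rewrite !(ipDl Hip) !(ipDr Hip) !(ipZl Hip) !(ipZr Hip) gf // fg // Hg // Hf //.
  rewrite !conjc_real; transitivity ((al%:C * al%:C + be%:C * be%:C) * (i == l)%:R).
    by ring.
  by rewrite albe mul1r.
have [[Al _] _] := HA j.
rewrite (linD Al) !(linZ Al) !(ipDl Hip) !(ipDr Hip) !(ipZl Hip) !(ipZr Hip).
rewrite Agf // Afg // Hga // Hfb // !conjc_real !mxE.
by rewrite -al2 -be2 !rmorphD !rmorphM; ring.
Qed.

Lemma star_center_of_Lambda_inf a k : Lambda_inf ip A a -> star_center (Lambda_k ip A k) a.
Proof.
have HAl j : is_linear_op (A j) by have [[]] := HA j.
move=> La; split.
  have [g [Hg Hga _]] := orthonormal_of_Lambda_inf La [::] k.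
  exact: (Lambda_k_of_orthonormal Hip HAl Hg Hga).
move=> b Lb t t01; have [f [Hf Hfb _]] := orthonormal_of_Lambda_k (T := [::]) Lb (leqnn k).
pose T := [seq f i | i <- iota 0 k] ++
          flatten [seq [seq A j (f i) | j <- enum 'I_m] | i <- iota 0 k].
have [g [Hg Hga gT]] := orthonormal_of_Lambda_inf La T k.
have fT i : (i < k)%N -> f i \in T.
  by move=> ik; rewrite mem_cat; apply/orP; left; apply: map_f; rewrite mem_iota.
have AfT j i : (i < k)%N -> A j (f i) \in T.
  move=> ik; rewrite mem_cat; apply/orP; right; apply/flattenP.
  exists [seq A j' (f i) | j' <- enum 'I_m]; first by apply: map_f; rewrite mem_iota.
  by apply: map_f; rewrite mem_enum.
have [Hh Hhab] := scalar_on_mix t01 Hf Hfb Hg Hga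
  (fun i l ik lk => gT i _ ik (fT l lk)) (fun j i l ik lk => gT i _ ik (AfT j l lk)).
exact: (Lambda_k_of_orthonormal Hip HAl Hh Hhab).
Qed.

Lemma perturbed_ranges_of_Lambda_k a : (forall k, (0 < k)%N -> Lambda_k ip A k a) ->
  in_perturbed_ranges ip A a.
Proof.
move=> La F HF.
have Fbasis j : exists nf : nat * (nat -> V), basis_of (range (F j)) nf.1 nf.2.
  by have [_ [n /subspace_dimP [f Hf]]] := HF j; exists (n, f).
have [nf Hnf] := boolp.choice Fbasis.
pose T := flatten [seq [seq (nf j).2 l | l <- iota 0 (nf j).1] | j <- enum 'I_m].
have [e [He Hea eT]] := orthonormal_of_Lambda_k (T := T) (La _ (ltn0Sn _)) (eq_leq (addn1 _)).
have x_orth_F j v : range (F j) v -> ip (e 0%N) v = 0.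
  case: (Hnf j) => _ _ /[apply] -[c ->]; rewrite (ip_sumr Hip) big1 // => l _.
  rewrite (ipZr Hip) eT ?mulr0 //; apply/flattenP.
  exists [seq (nf j).2 l0 | l0 <- iota 0 (nf j).1]; first by apply: map_f; rewrite mem_enum.
  by apply: map_f; rewrite mem_iota add0n ltn_ord.
have Fx0 j : F j (e 0%N) = 0.
  have [[[Fl _] Fs] _] := HF j; apply: (ipxx_eq0 Hip).
  by rewrite Fs (x_orth_F j) //; exists (F j (e 0%N)).
exists (e 0%N); split=> [|j]; first exact: hnorm1 (orthonormal_ipxx He _).
by rewrite /add_tuple Fx0 addr0 (Hea j 0%N 0%N) // mulr1.
Qed.

End Compressions.

Theorem theorem4p2 (R : realType) (V : lmodType R[i]) (ip : V -> V -> R[i])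
  (HH : hilbert_space ip) (Hinf : infinite_dimensional V)
  (m : nat) (A : 'I_m -> V -> V)
  (HA : forall j, bounded_selfadjoint ip (A j)) :
  (forall a : 'rV[R]_m,
     (Lambda_inf ip A a <->
        (forall k : nat, (0 < k)%N -> star_center (Lambda_k ip A k) a))
  /\ ((forall k : nat, (0 < k)%N -> star_center (Lambda_k ip A k) a) <->
        (forall k : nat, (0 < k)%N -> Lambda_k ip A k a))
  /\ ((forall k : nat, (0 < k)%N -> Lambda_k ip A k a) <->
        (forall F : 'I_m -> V -> V,
           (forall j, bounded_selfadjoint ip (F j) /\ finite_rank (F j)) ->
           joint_num_range ip (add_tuple A F) a)))
  /\ convex_set (Lambda_inf ip A).
Proof.
case: HH => Hip Hc.
have LS a : Lambda_inf ip A a -> forall k, (0 < k)%N -> star_center (Lambda_k ip A k) a.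
  by move=> La k _; exact: star_center_of_Lambda_inf.
have SL a : (forall k, (0 < k)%N -> star_center (Lambda_k ip A k) a) ->
    forall k, (0 < k)%N -> Lambda_k ip A k a.
  by move=> Sa k k0; case: (Sa k k0).
have LW a : (forall k, (0 < k)%N -> Lambda_k ip A k a) -> in_perturbed_ranges ip A a.
  exact: perturbed_ranges_of_Lambda_k.
have WL a : in_perturbed_ranges ip A a -> Lambda_inf ip A a.
  exact: Lambda_inf_of_perturbed_ranges.
split=> [a | c b Lc Lb t t01].
  split; first by split=> [|Sa]; [exact: LS | exact: WL (LW _ (SL _ Sa))].
  split; first by split=> [|La]; [exact: SL | exact: LS (WL _ (LW _ La))].
  by split=> [|Wa]; [exact: LW | exact: SL (LS _ (WL _ Wa))].
apply/WL/LW => k k0; have [_ seg_c] := LS c Lc k k0.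
by apply: seg_c t01; case: (LS b Lb k k0).
Qed.
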